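(* Let $C$ be a nonempty subset of a Hilbert space $H$ and let $\mathcal{S}=\{T_s:s\in S\}$ be a representation of a semigroup $S$ on $C$ by nonexpansive self-mappings. Suppose that $\{T_sc:s\in S\}$ is bounded for some $c\in C$. Let $X$ be a closed subspace of $\ell^\infty(S)$ containing the constant functions and invariant under left translations. If $X$ has a left invariant mean $\mu$ and if $y_c\in X$ for each $y\in H$, where $y_c(s)=\langle T_sc\,|\,y\rangle$ ($s\in S$), then $T_\mu c\in A_C(\mathcal{S})$; in particular $A_C(\mathcal{S})\neq\emptyset$.
   Context: A representation is a family $T_s:C\to C$ with $T_{st}=T_s\circ T_t$; nonexpansive means $\|T_sx-T_sy\|\le\|x-y\|$. $\ell^\infty(S)$ is the space of bounded complex functions on $S$ with sup norm; the left translate of $f$ by $s$ is $(\ell_sf)(t)=f(st)$. A mean on $X$ is $m\in X^*$ with $\|m\|=m(1)=1$; it is left invariant if $m(\ell_sf)=m(f)$ for all $s\in S$, $f\in X$. $T_\mu c$ denotes the unique element $a\in H$ with $\langle a\,|\,y\rangle=\mu(y_c)$ for all $y\in H$. $A_C(\mathcal{S})$ is the set of $a\in H$ with $\|a-T_sx\|\le\|a-x\|$ for all $x\in C$, $s\in S$. *)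

From HB Require Import structures.
From mathcomp Require Import all_boot all_order all_algebra.
From mathcomp Require Import all_classical all_reals.
From mathcomp Require Import ereal.
From mathcomp.real_closed Require Import complex.
Set Implicit Arguments. Unset Strict Implicit. Unset Printing Implicit Defensive.
Import Order.TTheory GRing.Theory Num.Theory.
Local Open Scope ring_scope.
Local Open Scope classical_set_scope.

(* Inner products are linear in the FIRST argument, conjugate-linear in the
   second (as in the paper: <a|y> = mu(y_c) with y_c(s) = <T_s c | y>). *)

Section Defs.
Variable R : realType.
Local Notation C := R[i].
Definition cmod (z : C) : R := ComplexField.Normc.normc z.

Definition hnorm (H : lmodType C) (ip : H -> H -> C) (x : H) : R :=
  Num.sqrt (complex.Re (ip x x)).

Definition is_hilbert (H : lmodType C) (ip : H -> H -> C) : Prop :=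
  [/\ (forall (a : C) (x y z : H), ip (a *: x + y) z = a * ip x z + ip y z),
      (forall x y : H, ip y x = conjc (ip x y)),
      (forall x : H, 0 <= ip x x),
      (forall x : H, ip x x = 0 -> x = 0)
    & (forall u : nat -> H,
        (forall e : R, 0 < e -> exists N : nat, forall m n : nat,
            (N <= m)%N -> (N <= n)%N -> hnorm ip (u m - u n) <= e) ->
        exists l : H, forall e : R, 0 < e -> exists N : nat, forall n : nat,
            (N <= n)%N -> hnorm ip (u n - l) <= e)].

Definition is_semigroup (S : Type) (op : S -> S -> S) : Prop :=
  forall s t u : S, op s (op t u) = op (op s t) u.

(* T = {T_s : s in S} is a representation of (S, op) on C by self-mappings
   of C (the maps are total functions H -> H; only their restriction to C
   matters). *)
Definition is_representation (H : Type) (S : Type) (op : S -> S -> S)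
    (Cs : set H) (T : S -> H -> H) : Prop :=
  (forall s x, Cs x -> Cs (T s x)) /\
  (forall s t x, Cs x -> T (op s t) x = T s (T t x)).

Definition nonexpansive_rep (H : lmodType C) (ip : H -> H -> C) (S : Type)
    (Cs : set H) (T : S -> H -> H) : Prop :=
  forall s x y, Cs x -> Cs y -> hnorm ip (T s x - T s y) <= hnorm ip (x - y).

Definition bounded_fun (S : Type) (f : S -> C) : Prop :=
  exists M : R, forall s, cmod (f s) <= M.

Definition supnorm (S : Type) (f : S -> C) : \bar R :=
  ereal_sup [set (cmod (f s))%:E | s in [set: S]].

Definition ltrans (S : Type) (op : S -> S -> S) (s : S) (f : S -> C) : S -> C :=
  fun t => f (op s t).

Definition cst_fun (S : Type) (a : C) : S -> C := fun _ => a.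

Definition admissible_subspace (S : Type) (op : S -> S -> S)
    (X : set (S -> C)) : Prop :=
  [/\ (forall f : S -> C, X f -> bounded_fun f),
      (forall (a : C) f g, X f -> X g -> X (fun s => a * f s + g s)),
      (forall f : S -> C, bounded_fun f ->
          (forall e : R, 0 < e -> exists g, X g /\ (supnorm (fun s => (f s - g s)%R) < e%:E)%E) ->
          X f),
      (forall a : C, X (@cst_fun S a))
    & (forall s f, X f -> X (ltrans op s f))].

Definition opnorm (S : Type) (X : set (S -> C)) (mu : (S -> C) -> C) : \bar R :=
  ereal_sup [set (cmod (mu f))%:E | f in [set f | X f /\ (supnorm f <= 1%:E)%E]].

Definition is_mean (S : Type) (X : set (S -> C)) (mu : (S -> C) -> C) : Prop :=
  [/\ (forall (a : C) f g, X f -> X g ->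
         mu (fun s => a * f s + g s) = a * mu f + mu g),
      opnorm X mu = 1%:E
    & mu (@cst_fun S 1) = 1].

Definition left_invariant (S : Type) (op : S -> S -> S) (X : set (S -> C))
    (mu : (S -> C) -> C) : Prop :=
  forall s f, X f -> mu (ltrans op s f) = mu f.

Definition yc (H : lmodType C) (ip : H -> H -> C) (S : Type) (T : S -> H -> H)
    (c y : H) : S -> C := fun s => ip (T s c) y.

(* T_mu c = a  iff  <a|y> = mu(y_c) for all y *)
Definition is_Tmu (H : lmodType C) (ip : H -> H -> C) (S : Type) (T : S -> H -> H)
    (mu : (S -> C) -> C) (c a : H) : Prop :=
  forall y : H, ip a y = mu (yc ip T c y).

Definition A_C (H : lmodType C) (ip : H -> H -> C) (S : Type)
    (Cs : set H) (T : S -> H -> H) : set H :=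
  [set a | forall x s, Cs x -> hnorm ip (a - T s x) <= hnorm ip (a - x)].

End Defs.

From HB Require Import structures.
From mathcomp Require Import all_boot all_order all_algebra.
From mathcomp Require Import all_classical all_reals.
From mathcomp Require Import ereal.
From mathcomp.real_closed Require Import complex.
From mathcomp Require Import ring lra.
Import Order.TTheory GRing.Theory Num.Theory.
Local Open Scope ring_scope.
Local Open Scope classical_set_scope.
Set Implicit Arguments. Unset Strict Implicit. Unset Printing Implicit Defensive.

(* Riesz representation (via a minimiser of |x|^2 - 2 Re psi x, found by the
   parallelogram law and completeness) turns y |-> mu(y_c) into <a | y> for a unique a.
   For x in C and s in S, nonexpansiveness gives, for every t,
     2 Re <T_t c | x> - 2 Re <T_st c | T_s x> <= |x|^2 - |T_s x|^2 + e(t) - e(st)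
   with e(t) = |T_t c|^2 bounded.  Applying the left invariant mean and discarding the
   bounded coboundary e - e(s.) yields 2 Re <a | x> - 2 Re <a | T_s x> <= |x|^2 - |T_s x|^2,
   which is |a - T_s x| <= |a - x|. *)


Section ComplexFacts.
Variable R : realType.
Implicit Types (r : R) (w z : R[i]).

Lemma ReMl r z : complex.Re (r%:C%C * z) = r * complex.Re z.
Proof. by case: z => a b /=; rewrite mul0r subr0. Qed.

Lemma ReMi_eq w z :
  complex.Re w = complex.Re z -> complex.Re (w * 'i%C) = complex.Re (z * 'i%C) ->
  w = z.
Proof.
by rewrite !ReiNIm => eqRe /oppr_inj eqIm; apply/eqP; rewrite eq_complex eqRe eqIm !eqxx.
Qed.

Lemma ReMn (n : nat) z : complex.Re (n%:R * z) = n%:R * complex.Re z.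
Proof. by rewrite !mulr_natl raddfMn. Qed.

Lemma ReB_real w r : complex.Re (w - r%:C%C) = complex.Re w - r.
Proof. by case: w. Qed.

Lemma ImB_real w r : complex.Im (w - r%:C%C) = complex.Im w.
Proof. by case: w => a b /=; rewrite oppr0 addr0. Qed.

Lemma cmod_le z (rho : R) : 0 <= rho ->
  (cmod z <= rho) = (complex.Re z ^+ 2 + complex.Im z ^+ 2 <= rho ^+ 2).
Proof.
move=> rho0; case: z => a b /=.
by rewrite -[in LHS](ger0_norm rho0) -sqrtr_sqr ler_sqrt ?sqr_ge0.
Qed.

Lemma cmodM w z : cmod (w * z) = cmod w * cmod z.
Proof. exact: ComplexField.Normc.normcM. Qed.

Lemma cmod_real r : cmod r%:C%C = `|r|.
Proof. by rewrite /cmod /= expr0n addr0 sqrtr_sqr. Qed.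

End ComplexFacts.

Section RealFacts.
Variable R : realType.

Lemma inv_succ_le (e : R) : 0 < e ->
  exists N : nat, forall n, (N <= n)%N -> n.+1%:R^-1 <= e.
Proof.
move=> e_gt0; exists (Num.trunc e^-1) => n leNn.
rewrite -[e]invrK lef_pV2 ?posrE ?invr_gt0 ?ltr0Sn //.
by apply: ltW; apply: (lt_le_trans (truncnS_gt _)); rewrite ler_nat ltnS.
Qed.

Lemma le0_natmul_bounded (x B : R) : (forall n : nat, n%:R * x <= B) -> x <= 0.
Proof.
move=> bounded; rewrite leNgt; apply/negP => x_gt0.
have := bounded (Num.trunc (B / x)).+1.
by rewrite -ler_pdivlMr // leNgt truncnS_gt.
Qed.

Lemma linear_quadratic_ge0 (p q : R) : (forall t, 0 <= t * q + t ^+ 2 * p) -> q = 0.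
Proof.
move=> ge0; have k_gt0 : 0 < `|p| + 1 by rewrite ltr_wpDl.
have := ge0 (- q / (`|p| + 1)).
have -> : - q / (`|p| + 1) * q + (- q / (`|p| + 1)) ^+ 2 * p =
          q ^+ 2 * (p - `|p| - 1) / (`|p| + 1) ^+ 2.
  by field; rewrite gt_eqF.
rewrite pmulr_lge0 ?invr_gt0 ?exprn_gt0 // => h.
by apply/eqP; rewrite -sqrf_eq0 eq_le sqr_ge0 andbT; have := ler_norm p; nra.
Qed.

End RealFacts.

Section Mean.
Variables (R : realType) (S : Type) (op : S -> S -> S).
Variables (X : set (S -> R[i])) (mu : (S -> R[i]) -> R[i]).
Hypothesis X_adm : admissible_subspace op X.
Hypothesis mu_mean : is_mean X mu.
Hypothesis mu_inv : left_invariant op X mu.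

Lemma mean_linear a f g : X f -> X g -> mu (fun s => a * f s + g s) = a * mu f + mu g.
Proof. by case: mu_mean => lin _ _; apply: lin. Qed.

Lemma mean_cst a : mu (cst_fun a) = a.
Proof.
have [_ _ _ X_cst _] := X_adm; have [_ _ mu1] := mu_mean.
have -> : cst_fun a = (fun s => a * @cst_fun R S 1 s + cst_fun 0 s).
  by apply: funext => s; rewrite /cst_fun mulr1 addr0.
have mu0 : mu (cst_fun 0) = 0.
  have := mean_linear 1 (X_cst 0) (X_cst 0).
  have -> : (fun s => 1 * @cst_fun R S 0 s + cst_fun 0 s) = cst_fun 0.
    by apply: funext => s; rewrite /cst_fun mul1r addr0.
  by rewrite mul1r => /(canLR (addrK _)); rewrite subrr.
by rewrite mean_linear // mu1 mu0 mulr1 addr0.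
Qed.

Lemma mem_scale a f : X f -> X (fun s => a * f s).
Proof.
have [_ X_lin _ X_cst _] := X_adm => Xf.
have -> : (fun s => a * f s) = (fun s => a * f s + cst_fun 0 s).
  by apply: funext => s; rewrite /cst_fun addr0.
exact: X_lin.
Qed.

Lemma mean_scale a f : X f -> mu (fun s => a * f s) = a * mu f.
Proof.
have [_ _ _ X_cst _] := X_adm => Xf.
have -> : (fun s => a * f s) = (fun s => a * f s + cst_fun 0 s).
  by apply: funext => s; rewrite /cst_fun addr0.
by rewrite mean_linear // mean_cst addr0.
Qed.

Lemma mean_cmod_le1 f : X f -> (forall s, cmod (f s) <= 1) -> cmod (mu f) <= 1.
Proof.
case: mu_mean => _ mu_norm _ Xf f_le1.
rewrite -lee_fin -mu_norm; apply: ereal_sup_ubound; exists f => //; split => //.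
by apply: ge_ereal_sup => _ [s _ <-]; rewrite lee_fin.
Qed.

Lemma mean_disc f z (rho : R) : 0 < rho -> X f ->
  (forall s, cmod (f s - z) <= rho) -> cmod (mu f - z) <= rho.
Proof.
move=> rho_gt0 Xf f_disc; have [_ X_lin _ X_cst _] := X_adm.
pose g s := rho^-1%:C%C * f s + cst_fun (- (rho^-1%:C%C * z)) s.
have g_scaled s : g s = rho^-1%:C%C * (f s - z) by rewrite /g /cst_fun mulrBr.
have cmod_scaled w : cmod (rho^-1%:C%C * w) = rho^-1 * cmod w.
  by rewrite cmodM cmod_real ger0_norm // invr_ge0 ltW.
have Xg : X g by apply: X_lin => //; apply: X_cst.
have mu_g : mu g = rho^-1%:C%C * (mu f - z) by rewrite mean_linear // mean_cst mulrBr.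
have := mean_cmod_le1 Xg.
rewrite mu_g cmod_scaled ler_pdivrMl // mulr1; apply => s.
by rewrite g_scaled cmod_scaled ler_pdivrMl // mulr1.
Qed.

(* The range of f lies in a disc centred at A - r of radius sqrt (r^2 + L^2); letting
   r grow, these discs shrink to the half-plane Re <= A. *)
Lemma mean_Re_le f (A : R) : X f ->
  (forall s, complex.Re (f s) <= A) -> complex.Re (mu f) <= A.
Proof.
move=> Xf f_le; have [X_bounded _ _ _ _] := X_adm.
have [L L_ge0 f_sqr_le] : exists2 L, 0 <= L &
    forall s, complex.Re (f s) ^+ 2 + complex.Im (f s) ^+ 2 <= L ^+ 2.
  have [L0 f_bounded] := X_bounded f Xf; exists `|L0| => // s.
  by rewrite -cmod_le ?normr_ge0 // (le_trans (f_bounded s)) ?ler_norm.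
rewrite leNgt; apply/negP => lt_A_mu.
have [d d_gt0 mu_eq] : exists2 d, 0 < d & complex.Re (mu f) = A + d.
  by exists (complex.Re (mu f) - A); rewrite ?subr_gt0 // addrC subrK.
have [r r_ge rd_gt] : exists2 r, L + `|A| + 1 <= r & L ^+ 2 < r * d.
  exists (L + `|A| + 1 + L ^+ 2 / d); first by rewrite lerDl divr_ge0 ?sqr_ge0 ?ltW.
  rewrite mulrDl divfK ?gt_eqF // ltrDr.
  by rewrite mulr_gt0 // ltr_wpDl // addr_ge0.
have A_le := ler_norm A.
have [rho rho_gt0 rho_sqr] : exists2 rho, 0 < rho & rho ^+ 2 = r ^+ 2 + L ^+ 2.
  exists (Num.sqrt (r ^+ 2 + L ^+ 2)); last by rewrite sqr_sqrtr // addr_ge0 ?sqr_ge0.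
  have r_gt0 : 0 < r by have := normr_ge0 A; lra.
  by rewrite sqrtr_gt0 ltr_wpDr ?sqr_ge0 ?exprn_gt0.
have rho_ge0 := ltW rho_gt0.
have f_disc s : cmod (f s - (A - r)%:C%C) <= rho.
  rewrite cmod_le // ReB_real ImB_real rho_sqr.
  have := f_sqr_le s; have := f_le s; have := sqr_ge0 (complex.Im (f s)).
  set x := complex.Re (f s); set y := complex.Im (f s) => y2_ge0 x_le sqr_le.
  have x_ge : - L <= x by nra.
  have u_ge0 : 0 <= x - A + r by lra.
  have u_le : x - A + r <= r by lra.
  nra.
have := mean_disc rho_gt0 Xf f_disc.
rewrite cmod_le // ReB_real ImB_real rho_sqr mu_eq.
have := sqr_ge0 (complex.Im (mu f)); nra.
Qed.

Section Orbit.
Variables (s : S) (g : S -> R[i]).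
Hypothesis Xg : X g.

Lemma iter_translate_ltrans k :
  (fun t => g (iter k.+1 (op s) t)) = ltrans op s (fun t => g (iter k (op s) t)).
Proof. by apply: funext => t; rewrite /ltrans iterSr. Qed.

Lemma mem_iter_translate k : X (fun t => g (iter k (op s) t)).
Proof.
have [_ _ _ _ X_ltrans] := X_adm.
by elim: k => [|k IHk] //; rewrite iter_translate_ltrans; apply: X_ltrans.
Qed.

Lemma mean_iter_translate k : mu (fun t => g (iter k (op s) t)) = mu g.
Proof.
elim: k => [|k IHk] //.
by rewrite iter_translate_ltrans mu_inv //; apply: mem_iter_translate.
Qed.

Definition orbit_sum n : S -> R[i] := fun t => \sum_(k < n) g (iter k (op s) t).

Lemma orbit_sumS n :
  orbit_sum n.+1 = (fun t => 1 * g (iter n (op s) t) + orbit_sum n t).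
Proof. by apply: funext => t; rewrite /orbit_sum big_ord_recr /= mul1r addrC. Qed.

Lemma orbit_sum0 : orbit_sum 0 = cst_fun 0.
Proof. by apply: funext => t; rewrite /orbit_sum big_ord0. Qed.

Lemma mem_orbit_sum n : X (orbit_sum n).
Proof.
have [_ X_lin _ X_cst _] := X_adm.
elim: n => [|n IHn]; first by rewrite orbit_sum0.
by rewrite orbit_sumS; apply: X_lin => //; apply: mem_iter_translate.
Qed.

Lemma mean_orbit_sum n : mu (orbit_sum n) = n%:R * mu g.
Proof.
elim: n => [|n IHn]; first by rewrite orbit_sum0 mean_cst mul0r.
have Xk := mem_iter_translate n; have Xn := mem_orbit_sum n.
by rewrite orbit_sumS mean_linear // mean_iter_translate IHn mul1r -nat1r mulrDl mul1r.
Qed.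

Lemma Re_orbit_sum_le (D : R) (e : S -> R) :
  (forall t, complex.Re (g t) <= D + e t - e (op s t)) ->
  forall n t, complex.Re (orbit_sum n t) <= n%:R * D + e t - e (iter n (op s) t).
Proof.
move=> g_le; elim=> [|n IHn] t; first by rewrite orbit_sum0 mul0r add0r subrr.
rewrite orbit_sumS /= raddfD mul1r; have := g_le (iter n (op s) t); have := IHn t.
rewrite -iterS -nat1r; lra.
Qed.

(* e need not lie in X; averaging n translates of g bounds its contribution by B / n. *)
Lemma mean_Re_le_coboundary (D B : R) (e : S -> R) :
  (forall t, 0 <= e t <= B) ->
  (forall t, complex.Re (g t) <= D + e t - e (op s t)) ->
  complex.Re (mu g) <= D.
Proof.
move=> e_bounded g_le; rewrite -subr_le0; apply: (@le0_natmul_bounded _ _ B) => n.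
have : complex.Re (mu (orbit_sum n)) <= n%:R * D + B.
  apply: mean_Re_le (mem_orbit_sum n) _ => t.
  have [e_ge0 _] := andP (e_bounded (iter n (op s) t)); have [_ e_le] := andP (e_bounded t).
  by apply: le_trans (Re_orbit_sum_le g_le n t) _; lra.
rewrite mean_orbit_sum ReMn mulrBr.
set a := _ * complex.Re _; set b := _ * D; lra.
Qed.

End Orbit.

End Mean.

Section PreHilbert.
Variables (R : realType) (H : lmodType R[i]) (ip : H -> H -> R[i]).
Hypothesis ipDZl : forall a x y z, ip (a *: x + y) z = a * ip x z + ip y z.
Hypothesis ipC : forall x y, ip y x = conjc (ip x y).
Hypothesis ip_ge0 : forall x, 0 <= ip x x.
Hypothesis ip_eq0 : forall x, ip x x = 0 -> x = 0.

Lemma ipDl x y z : ip (x + y) z = ip x z + ip y z.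
Proof. by have := ipDZl 1 x y z; rewrite scale1r mul1r. Qed.

Lemma ip0l z : ip 0 z = 0.
Proof. by apply: (@addrI _ (ip 0 z)); rewrite -ipDl !addr0. Qed.

Lemma ipZl a x z : ip (a *: x) z = a * ip x z.
Proof. by have := ipDZl a x 0 z; rewrite !addr0 ip0l addr0. Qed.

Lemma ipBl x y z : ip (x - y) z = ip x z - ip y z.
Proof. by rewrite ipDl -scaleN1r ipZl mulN1r. Qed.

Lemma ipDr x y z : ip z (x + y) = ip z x + ip z y.
Proof. by rewrite !(ipC _ z) ipDl rmorphD. Qed.

Lemma ipZr a x z : ip z (a *: x) = conjc a * ip z x.
Proof. by rewrite !(ipC _ z) ipZl rmorphM. Qed.

Lemma ip_injl a b : (forall y, ip a y = ip b y) -> a = b.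
Proof.
by move=> eq_ab; apply/eqP; rewrite -subr_eq0; apply/eqP/ip_eq0; rewrite ipBl eq_ab subrr.
Qed.

Definition reip x y : R := complex.Re (ip x y).
Definition sqnorm x : R := reip x x.

Lemma reipC x y : reip y x = reip x y.
Proof. by rewrite /reip ipC; case: (ip x y). Qed.

Lemma reipDl x y z : reip (x + y) z = reip x z + reip y z.
Proof. by rewrite /reip ipDl raddfD. Qed.

Lemma reipBl x y z : reip (x - y) z = reip x z - reip y z.
Proof. by rewrite /reip ipBl raddfB. Qed.

Lemma reipZl r x z : reip (r%:C%C *: x) z = r * reip x z.
Proof. by rewrite /reip ipZl ReMl. Qed.

Lemma reipDr x y z : reip z (x + y) = reip z x + reip z y.
Proof. by rewrite !(reipC _ z) reipDl. Qed.

Lemma reipBr x y z : reip z (x - y) = reip z x - reip z y.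
Proof. by rewrite !(reipC _ z) reipBl. Qed.

Lemma reipZr r x z : reip z (r%:C%C *: x) = r * reip z x.
Proof. by rewrite !(reipC _ z) reipZl. Qed.

Lemma sqnorm_ge0 x : 0 <= sqnorm x.
Proof. by have := ip_ge0 x; rewrite lecE => /andP[]. Qed.

Lemma sqnorm_eq0 x : sqnorm x = 0 -> x = 0.
Proof.
move=> sq0; apply: ip_eq0; apply/eqP; rewrite eq_complex -[complex.Re _]/(sqnorm x) sq0.
by have := ip_ge0 x; rewrite lecE eqxx => /andP[].
Qed.

Lemma sqnormD x y : sqnorm (x + y) = sqnorm x + 2 * reip x y + sqnorm y.
Proof. rewrite /sqnorm reipDl !reipDr (reipC y x); ring. Qed.

Lemma sqnormB x y : sqnorm (x - y) = sqnorm x - 2 * reip x y + sqnorm y.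
Proof. rewrite /sqnorm reipBl !reipBr (reipC y x); ring. Qed.

Lemma sqnormZ r x : sqnorm (r%:C%C *: x) = r ^+ 2 * sqnorm x.
Proof. by rewrite /sqnorm reipZl reipZr mulrA expr2. Qed.

Lemma hnorm_ge0 x : 0 <= hnorm ip x.
Proof. exact: sqrtr_ge0. Qed.

Lemma hnorm_sqr x : hnorm ip x ^+ 2 = sqnorm x.
Proof. by rewrite sqr_sqrtr // sqnorm_ge0. Qed.

Lemma hnorm_leE x e : 0 <= e -> (hnorm ip x <= e) = (sqnorm x <= e ^+ 2).
Proof. by move=> e0; rewrite -[e in LHS]ger0_norm // -sqrtr_sqr ler_sqrt ?sqr_ge0. Qed.

Lemma hnorm_le x y : (hnorm ip x <= hnorm ip y) = (sqnorm x <= sqnorm y).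
Proof. by rewrite ler_sqrt // sqnorm_ge0. Qed.

Lemma reip_sqr_le x y : reip x y ^+ 2 <= sqnorm x * sqnorm y.
Proof.
have [y0|ny0] := eqVneq (sqnorm y) 0.
  by rewrite (sqnorm_eq0 y0) /sqnorm reipC /reip !ip0l /= expr0n mulr0.
have ny_gt0 : 0 < sqnorm y by rewrite lt0r ny0 sqnorm_ge0.
have := sqnorm_ge0 ((sqnorm y)%:C%C *: x - (reip x y)%:C%C *: y).
rewrite sqnormB !sqnormZ reipZl reipZr => h.
have : 0 <= sqnorm y * (sqnorm x * sqnorm y - reip x y ^+ 2) by nra.
by rewrite pmulr_rge0 // subr_ge0.
Qed.

Lemma reip_le_hnorm x y : reip x y <= hnorm ip x * hnorm ip y.
Proof.
rewrite -sqrtrM ?sqnorm_ge0 //; apply: (le_trans (ler_norm _)).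
by rewrite -sqrtr_sqr ler_sqrt ?reip_sqr_le // mulr_ge0 ?sqnorm_ge0.
Qed.

Lemma sqnormBC x y : sqnorm (x - y) = sqnorm (y - x).
Proof. rewrite !sqnormB (reipC y x); ring. Qed.

Lemma hnormBC x y : hnorm ip (x - y) = hnorm ip (y - x).
Proof. by congr Num.sqrt; apply: sqnormBC. Qed.

Section Riesz.
Hypothesis ip_complete : forall u : nat -> H,
  (forall e : R, 0 < e -> exists N : nat, forall m n : nat,
     (N <= m)%N -> (N <= n)%N -> hnorm ip (u m - u n) <= e) ->
  exists l : H, forall e : R, 0 < e -> exists N : nat, forall n : nat,
     (N <= n)%N -> hnorm ip (u n - l) <= e.

Section RealRiesz.
Variables (L : H -> R) (K : R).
Hypothesis LD : forall x y, L (x + y) = L x + L y.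
Hypothesis LZ : forall r x, L (r%:C%C *: x) = r * L x.
Hypothesis L_le : forall x, L x <= K * hnorm ip x.
Hypothesis K_ge0 : 0 <= K.

Definition energy x := sqnorm x - 2 * L x.
Local Notation m := (inf (range energy)).

Lemma energy_lb x : - K ^+ 2 <= energy x.
Proof.
rewrite /energy -hnorm_sqr; have := L_le x; have := sqr_ge0 (hnorm ip x - K); nra.
Qed.

Lemma has_inf_energy : has_inf (range energy).
Proof. by split; [exists (energy 0), 0 | exists (- K ^+ 2) => _ [z _ <-]; apply: energy_lb]. Qed.

Lemma inf_le_energy x : m <= energy x.
Proof. by apply: (ge_inf has_inf_energy.2); exists x. Qed.

Lemma sqnormB_le_energy u v : sqnorm (u - v) <= 2 * (energy u + energy v) - 4 * m.
Proof.
(* parallelogram law, with the energy of the midpoint bounded below by m *)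
have := inf_le_energy ((2^-1)%:C%C *: (u + v)).
rewrite /energy sqnormZ LZ LD sqnormD sqnormB.
have half2 : 2^-1 * 2 = 1 :> R by rewrite mulVf.
have half_sqr : 2^-1 ^+ 2 * 4 = 1 :> R by field.
nra.
Qed.

Lemma energy_le_near a z : energy a <= energy z + 2 * (hnorm ip a + K) * hnorm ip (z - a).
Proof.
have -> : energy z = energy a - 2 * reip a (a - z) + sqnorm (z - a) - 2 * L (z - a).
  have {1}-> : z = a + (z - a) by rewrite addrC subrK.
  by rewrite /energy sqnormD LD reipBr -[reip a a]/(sqnorm a) reipBr; ring.
have := reip_le_hnorm a (a - z); have := L_le (z - a).
rewrite hnormBC; have := sqnorm_ge0 (z - a); nra.
Qed.

Lemma exists_energy_minimizer : exists a, forall z, energy a <= energy z.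
Proof.
have /choice [zs zs_lt] : forall n : nat, exists z, energy z < m + n.+1%:R^-1.
  move=> n; have inv_gt0 : 0 < n.+1%:R^-1 :> R by rewrite invr_gt0.
  by have [_ [z _ <-]] := inf_adherent inv_gt0 has_inf_energy; exists z.
have zs_cauchy : forall e, 0 < e -> exists N : nat, forall p q : nat,
    (N <= p)%N -> (N <= q)%N -> hnorm ip (zs p - zs q) <= e.
  move=> e e_gt0; have [N leN] := inv_succ_le (divr_gt0 (exprn_gt0 2 e_gt0) (ltr0Sn R 3)).
  exists N => p q Np Nq; rewrite hnorm_leE; last exact: ltW.
  have := sqnormB_le_energy (zs p) (zs q); have := zs_lt p; have := zs_lt q.
  have := leN p Np; have := leN q Nq; have -> : e ^+ 2 = 4 * (e ^+ 2 / 4) by field.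
  set u := q.+1%:R^-1; set v := p.+1%:R^-1; clearbody u v; lra.
have [a zs_to_a] := ip_complete zs_cauchy.
exists a => z; apply: le_trans (inf_le_energy z); apply/ler_addgt0Pr => e e_gt0.
pose k := 2 * (hnorm ip a + K).
have k_ge0 : 0 <= k by rewrite mulr_ge0 // addr_ge0 // hnorm_ge0.
have delta_gt0 : 0 < e / (2 * k + 1) by rewrite divr_gt0 // ltr_wpDl // mulr_ge0.
have [N1 near_a] := zs_to_a _ delta_gt0.
have [N2 small] := inv_succ_le (divr_gt0 e_gt0 (ltr0Sn R 1)).
pose n := maxn N1 N2.
have : k * hnorm ip (zs n - a) <= e / 2.
  apply: (le_trans (ler_wpM2l k_ge0 (near_a n (leq_maxl _ _)))).
  rewrite mulrA ler_pdivrMr; last by rewrite ltr_wpDl // mulr_ge0.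
  have -> : e / 2 * (2 * k + 1) = k * e + e / 2 by field.
  by rewrite lerDl divr_ge0 // ltW.
have := energy_le_near a (zs n); have := zs_lt n; have := small n (leq_maxr _ _).
rewrite -/k; set u := n.+1%:R^-1; clearbody u; lra.
Qed.

Lemma energy_minimizer_reip a :
  (forall z, energy a <= energy z) -> forall w, reip a w = L w.
Proof.
move=> min_a w; suff : 2 * (reip a w - L w) = 0 by lra.
apply: (linear_quadratic_ge0 (p := sqnorm w)) => t.
have := min_a (a + t%:C%C *: w).
by rewrite /energy sqnormD sqnormZ reipZr LD LZ; nra.
Qed.

Lemma riesz_reip : exists a, forall w, reip a w = L w.
Proof.
by have [a min_a] := exists_energy_minimizer; exists a; apply: energy_minimizer_reip.
Qed.

End RealRiesz.

Lemma riesz (psi : H -> R[i]) (K : R) :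
  (forall a y z, psi (a *: y + z) = conjc a * psi y + psi z) ->
  (forall y, complex.Re (psi y) <= K * hnorm ip y) -> 0 <= K ->
  exists a, forall y, ip a y = psi y.
Proof.
move=> psiDZ psi_le K_ge0.
have psiD y z : psi (y + z) = psi y + psi z.
  by have := psiDZ 1 y z; rewrite scale1r conjc1 mul1r.
have psiZ a y : psi (a *: y) = conjc a * psi y.
  have psi0 : psi 0 = 0 by apply: (@addrI _ (psi 0)); rewrite -psiD !addr0.
  by rewrite -[a *: y]addr0 psiDZ psi0 addr0.
have ReD y z : complex.Re (psi (y + z)) = complex.Re (psi y) + complex.Re (psi z).
  by rewrite psiD raddfD.
have ReZ r y : complex.Re (psi (r%:C%C *: y)) = r * complex.Re (psi y).
  by rewrite psiZ conjc_real ReMl.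
have [a a_repr] := riesz_reip ReD ReZ psi_le K_ge0.
exists a => y; apply: ReMi_eq; first exact: a_repr.
(* the imaginary parts are compared by testing against -i y *)
have := a_repr ((- 'i)%C *: y).
rewrite /reip ipZr psiZ.
have -> : conjc (- 'i%C) = 'i%C :> R[i] by apply/eqP; rewrite eq_complex /= oppr0 opprK !eqxx.
by rewrite ![_ * 'i%C]mulrC.
Qed.

Section Tmu.
Variables (S : Type) (op : S -> S -> S) (Cs : set H) (T : S -> H -> H).
Variables (X : set (S -> R[i])) (mu : (S -> R[i]) -> R[i]) (c : H) (M : R).
Hypothesis T_rep : is_representation op Cs T.
Hypothesis T_nonexp : nonexpansive_rep ip Cs T.
Hypothesis Cc : Cs c.
Hypothesis orbit_bounded : forall s, hnorm ip (T s c) <= M.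
Hypothesis X_adm : admissible_subspace op X.
Hypothesis mu_mean : is_mean X mu.
Hypothesis mu_inv : left_invariant op X mu.
Hypothesis yc_mem : forall y, X (yc ip T c y).

Lemma mean_ycDZ a y z :
  mu (yc ip T c (a *: y + z)) = conjc a * mu (yc ip T c y) + mu (yc ip T c z).
Proof.
rewrite -(mean_linear mu_mean) //; congr mu; apply: funext => s.
by rewrite /yc ipDr ipZr.
Qed.

Lemma Re_mean_yc_le y : complex.Re (mu (yc ip T c y)) <= `|M| * hnorm ip y.
Proof.
apply: (mean_Re_le X_adm mu_mean (yc_mem y)) => s.
apply: le_trans (reip_le_hnorm _ _) _.
by rewrite ler_wpM2r ?hnorm_ge0 // (le_trans (orbit_bounded s)) ?ler_norm.
Qed.

Lemma Tmu_A_C a : is_Tmu ip T mu c a -> A_C ip Cs T a.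
Proof.
have [T_maps T_comp] := T_rep; have [_ X_lin _ _ X_ltrans] := X_adm.
move=> a_repr x s Cx; rewrite hnorm_le !sqnormB.
pose g t := 2 * yc ip T c x t + (-2) * ltrans op s (yc ip T c (T s x)) t.
have Xtr : X (ltrans op s (yc ip T c (T s x))) := X_ltrans s _ (yc_mem _).
have Xs := mem_scale X_adm (-2) Xtr.
have Xg : X g by apply: X_lin.
have g_le t : complex.Re (g t) <=
    (sqnorm x - sqnorm (T s x)) + sqnorm (T t c) - sqnorm (T (op s t) c).
  have := T_nonexp s (T_maps t c Cc) Cx; rewrite hnorm_le !sqnormB.
  rewrite /g /yc /ltrans raddfD mulNr raddfN /= !ReMn T_comp // -!/(reip _ _).
  lra.
have e_bounded t : 0 <= sqnorm (T t c) <= M ^+ 2.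
  have M_ge0 : 0 <= M := le_trans (hnorm_ge0 _) (orbit_bounded t).
  by rewrite sqnorm_ge0 -hnorm_sqr ler_sqr ?nnegrE ?hnorm_ge0 ?orbit_bounded.
have := mean_Re_le_coboundary X_adm mu_mean mu_inv Xg e_bounded g_le.
rewrite /g (mean_linear mu_mean) // (mean_scale X_adm mu_mean) // mu_inv // -!a_repr.
rewrite raddfD mulNr raddfN /= !ReMn -!/(reip _ _); lra.
Qed.

Lemma exists_Tmu : exists a, is_Tmu ip T mu c a.
Proof. exact: riesz mean_ycDZ Re_mean_yc_le (normr_ge0 M). Qed.

End Tmu.
End Riesz.

End PreHilbert.

Theorem lemma4p1 (R : realType) (H : lmodType R[i]) (ip : H -> H -> R[i])
    (S : Type) (op : S -> S -> S) (Cs : set H) (T : S -> H -> H)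
    (X : set (S -> R[i])) (mu : (S -> R[i]) -> R[i]) (c : H) :
  is_hilbert ip ->
  is_semigroup op ->
  Cs !=set0 ->
  is_representation op Cs T ->
  nonexpansive_rep ip Cs T ->
  Cs c ->
  (exists M : R, forall s : S, hnorm ip (T s c) <= M) ->
  admissible_subspace op X ->
  is_mean X mu ->
  left_invariant op X mu ->
  (forall y : H, X (yc ip T c y)) ->
  [/\ (exists! a : H, is_Tmu ip T mu c a),
      (forall a : H, is_Tmu ip T mu c a -> A_C ip Cs T a)
    & A_C ip Cs T !=set0].
Proof.
move=> [ipDZl ipC ip_ge0 ip_eq0 ip_complete] _ _ T_rep T_nonexp Cc [M orbit_bounded]
  X_adm mu_mean mu_inv yc_mem.
have Tmu_sub_A_C := Tmu_A_C ipDZl ipC ip_ge0 T_rep T_nonexp Cc orbit_bounded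
  X_adm mu_mean mu_inv yc_mem.
have [a a_Tmu] := exists_Tmu ipDZl ipC ip_ge0 ip_eq0 ip_complete orbit_bounded
  X_adm mu_mean yc_mem.
split; [exists a; split=> // b b_Tmu | exact: Tmu_sub_A_C | by exists a; apply: Tmu_sub_A_C].
by apply: (ip_injl ipDZl ip_eq0) => y; rewrite a_Tmu b_Tmu.
Qed.
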